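(* For every t-relation $r\subseteq\mathcal{D}$, every initial preference formula $F$, and every sequence $X\in\{\mathsf{T},\mathsf{S}\}^*$, we have $\mathrm{Best}_{\succ_{X\mathsf{S}}}(r)\subseteq \mathrm{Best}_{\succ_{X}}(r)$.
   Context: Fix attribute–taxonomy pairs $A_1{:}T_1,\dots,A_d{:}T_d$ with distinct attribute names, where each taxonomy $T_i=(V_i,\le_{V_i})$ is a poset. A t-tuple over a t-schema $S\subseteq\{A_1{:}T_1,\dots,A_d{:}T_d\}$ maps each $A_i$ in $S$ to a value of $V_i$; $\mathcal{D}$ is the set of all t-tuples over all such t-schemas, and a t-relation is a finite set of t-tuples. A preference relation is a binary relation $\succeq$ on $\mathcal{D}$; its strict part is $t_1\succ t_2$ iff $t_1\succeq t_2$ and not $t_2\succeq t_1$. Preferences are given by a formula $F(x,y)=\bigvee_i P_i(x,y)$, a disjunction of statements; each statement $P_i$ is a disjunction of clauses, each clause a satisfiable conjunction of atoms of the forms $x[A_i]\le_{V_i} v$, $x[A_i]\not\le_{V_i} v$, $y[A_i]\le_{V_i} v$, $y[A_i]\not\le_{V_i} v$; the formula induces $t_1\succeq t_2\iff F(t_1,t_2)$. Operator $\mathsf{T}$ maps a formula to one (obtained by adding statements built from composable clause pairs $C_m^b(x)\wedge C_q^w(y)$, where $C^b$ / $C^w$ are the $x$- / $y$-parts of a clause) inducing the transitive closure over $\mathcal{D}$ of the induced relation. Operator $\mathsf{S}$ (specificity-based refinement): repeat rounds; in a round, for each statement $P_i$ let $\mathrm{Impl}(P_i)$ be the set of statements $P_j$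 such that $P_j(t_2,t_1)\Rightarrow P_i(t_1,t_2)$ for all $t_1,t_2\in\mathcal{D}$ but not conversely; simultaneously replace every $P_i$ with nonempty $\mathrm{Impl}(P_i)$ by $P_i(x,y)\wedge\bigwedge_{P_j\in \mathrm{Impl}(P_i)}\neg P_j(y,x)$; stop when no $\mathrm{Impl}$ set is nonempty. After each operator, contradictory clauses and statements subsumed by others are removed. For $X\in\{\mathsf{T},\mathsf{S}\}^*$, $\succeq_X$ (with strict part $\succ_X$) is the relation induced by applying the operators of $X$ in order to the initial formula $F$ ($\succeq_\varepsilon=\succeq$). The Best operator is $\mathrm{Best}_\succ(r)=\{t_1\in r\mid \nexists t_2\in r,\ t_2\succ t_1\}$. *)

From mathcomp Require Import ssreflect ssrbool eqtype ssrnat fintype.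
From Stdlib Require Import List Relations.

Set Implicit Arguments.
Unset Strict Implicit.

Record taxonomy := Taxonomy {
  tcar : Type;
  tle : tcar -> tcar -> Prop;
  tle_refl : forall v, tle v v;
  tle_antisym : forall v w, tle v w -> tle w v -> v = w;
  tle_trans : forall u v w, tle u v -> tle v w -> tle u w
}.

Section Prefs.
Variable d : nat.
Variable T : 'I_d -> taxonomy.

(* A t-tuple over a t-schema S: for each attribute, Some value if the attribute
   belongs to S, None otherwise.  The type [ttuple] is the set D of all t-tuples
   over all t-schemas. *)
Definition ttuple := forall i : 'I_d, option (tcar (T i)).

(* Atom  z[A_i] <=_{V_i} v  (negated = false) or  z[A_i] not<= v (negated = true),
   where z is x (onx = true) or y (onx = false). *)
Inductive atom := Atom (onx : bool) (i : 'I_d) (negated : bool) (v : tcar (T i)).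

Definition atom_onx (a : atom) : bool := let: Atom b _ _ _ := a in b.

Definition atom_sem (a : atom) (x y : ttuple) : Prop :=
  let: Atom b i n v := a in
  let t := if b then x else y in
  let p := match t i with Some w => tle w v | None => False end in
  if n then ~ p else p.

Definition clause := list atom.
Definition statement := list clause.
Definition formula := list statement.

Definition clause_sem (c : clause) (x y : ttuple) : Prop :=
  List.Forall (fun a => atom_sem a x y) c.
Definition stmt_sem (s : statement) (x y : ttuple) : Prop :=
  List.Exists (fun c => clause_sem c x y) s.
Definition form_sem (f : formula) (x y : ttuple) : Prop :=
  List.Exists (fun s => stmt_sem s x y) f.

Definition xpart (c : clause) : clause := List.filter atom_onx c.
Definition ypart (c : clause) : clause := List.filter (fun a => ~~ atom_onx a) c.

Definition satisfiable (c : clause) : Prop := exists x y, clause_sem c x y.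

Definition wf_formula (f : formula) : Prop :=
  forall s, List.In s f -> forall c, List.In c s -> satisfiable c.

Definition strict (R : ttuple -> ttuple -> Prop) (t1 t2 : ttuple) : Prop :=
  R t1 t2 /\ ~ R t2 t1.

Definition subsumed (s1 s2 : statement) : Prop :=
  forall x y, stmt_sem s1 x y -> stmt_sem s2 x y.

Inductive cleanup_step : formula -> formula -> Prop :=
  | cs_clause (f1 f2 : formula) (s1 s2 : statement) (c : clause) :
      ~ satisfiable c ->
      cleanup_step (f1 ++ (s1 ++ c :: s2) :: f2) (f1 ++ (s1 ++ s2) :: f2)
  | cs_stmt (f1 f2 : formula) (s : statement) :
      (exists s', List.In s' (f1 ++ f2) /\ subsumed s s') ->
      cleanup_step (f1 ++ s :: f2) (f1 ++ f2).

Definition clean (f : formula) : Prop :=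
  (forall s, List.In s f -> forall c, List.In c s -> satisfiable c) /\
  (forall f1 f2 s, f = f1 ++ s :: f2 ->
     ~ exists s', List.In s' (f1 ++ f2) /\ subsumed s s').

Definition cleanup (f g : formula) : Prop :=
  clos_refl_trans formula cleanup_step f g /\ clean g.

Definition opT (f g : formula) : Prop :=
  exists extra : formula,
    (forall s, List.In s extra -> forall c, List.In c s ->
       exists s1 c1 s2 c2, List.In s1 f /\ List.In c1 s1 /\
                           List.In s2 f /\ List.In c2 s2 /\
                           c = xpart c1 ++ ypart c2) /\
    (forall x y, form_sem (f ++ extra) x y <-> clos_trans ttuple (form_sem f) x y) /\
    cleanup (f ++ extra) g.

Definition impl (Pi Pj : statement) : Prop :=
  (forall t1 t2, stmt_sem Pj t2 t1 -> stmt_sem Pi t1 t2) /\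
  ~ (forall t1 t2, stmt_sem Pi t1 t2 -> stmt_sem Pj t2 t1).

Definition has_impl (f : formula) (Pi : statement) : Prop :=
  exists Pj, List.In Pj f /\ impl Pi Pj.

(* One round of S: simultaneously replace every P_i with nonempty Impl(P_i) by
   (a clause-form rendering of) P_i(x,y) /\ /\_{P_j in Impl(P_i)} ~P_j(y,x). *)
Definition S_round (f g : formula) : Prop :=
  length g = length f /\
  forall k, k < length f ->
    let Pi := List.nth k f nil in
    let Qi := List.nth k g nil in
    (has_impl f Pi ->
       forall x y, stmt_sem Qi x y <->
         (stmt_sem Pi x y /\ forall Pj, List.In Pj f -> impl Pi Pj -> ~ stmt_sem Pj y x)) /\
    (~ has_impl f Pi -> Qi = Pi).

Definition S_step (f g : formula) : Prop :=
  exists h, S_round f h /\ cleanup h g.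

Definition no_impl (f : formula) : Prop :=
  forall Pi, List.In Pi f -> ~ has_impl f Pi.

Definition opS (f g : formula) : Prop :=
  clos_refl_trans formula S_step f g /\ no_impl g.

Inductive op := OpT | OpS.

Definition op_rel (o : op) : formula -> formula -> Prop :=
  match o with OpT => opT | OpS => opS end.

Inductive derives (F : formula) : list op -> formula -> Prop :=
  | der_nil : derives F nil F
  | der_snoc (X : list op) (G H : formula) (o : op) :
      derives F X G -> op_rel o G H -> derives F (X ++ o :: nil) H.

Definition Best (R : ttuple -> ttuple -> Prop) (r : list ttuple) (t1 : ttuple) : Prop :=
  List.In t1 r /\ ~ exists t2, List.In t2 r /\ R t2 t1.

End Prefs.

(* Each round of S replaces a statement P_i by P_i(x,y) /\ ~P_j(y,x) only for
   statements P_j with P_j(y,x) => P_i(x,y).  The weak relation can therefore only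
   shrink, while a strict pair (t1,t2) survives: it satisfies some P_i(t1,t2) and,
   since t2 is not preferred to t1, no P_j(t2,t1).  Clean-up does not change the
   induced relation.  Hence the strict part only grows under S, and Best, being
   antitone in the strict relation, can only shrink. *)
From mathcomp Require Import ssreflect ssrbool eqtype ssrnat fintype.
From Stdlib Require Import List Relations Classical.

Section Refinement.
Variable d : nat.
Variable T : 'I_d -> taxonomy.

Lemma form_sem_app (f1 f2 : formula T) x y :
  form_sem (f1 ++ f2) x y <-> form_sem f1 x y \/ form_sem f2 x y.
Proof. exact: Exists_app. Qed.

Lemma form_sem_cons (s : statement T) (f : formula T) x y :
  form_sem (s :: f) x y <-> stmt_sem s x y \/ form_sem f x y.
Proof. exact: Exists_cons. Qed.

Lemma stmt_sem_app (s1 s2 : statement T) x y :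
  stmt_sem (s1 ++ s2) x y <-> stmt_sem s1 x y \/ stmt_sem s2 x y.
Proof. exact: Exists_app. Qed.

Lemma stmt_sem_cons (c : clause T) (s : statement T) x y :
  stmt_sem (c :: s) x y <-> clause_sem c x y \/ stmt_sem s x y.
Proof. exact: Exists_cons. Qed.

Lemma cleanup_step_sem {f g : formula T} : cleanup_step f g ->
  forall x y, form_sem f x y <-> form_sem g x y.
Proof.
case=> [f1 f2 s1 s2 c c_unsat | f1 f2 s [s' [s'_in s_sub]]] x y.
- have c_false : ~ clause_sem c x y by move=> cxy; apply: c_unsat; exists x, y.
  rewrite !form_sem_app !form_sem_cons !stmt_sem_app !stmt_sem_cons; tauto.
- rewrite !form_sem_app form_sem_cons; split; last tauto.
  case=> [|[sxy|]]; try tauto.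
  have : form_sem (f1 ++ f2) x y by apply/Exists_exists; exists s'; auto.
  rewrite form_sem_app; tauto.
Qed.

Lemma cleanup_steps_sem {f g : formula T} :
  clos_refl_trans _ (@cleanup_step d T) f g ->
  forall x y, form_sem f x y <-> form_sem g x y.
Proof.
elim=> [a b /cleanup_step_sem // | a | a b c _ IHab _ IHbc] x y; first tauto.
by rewrite IHab IHbc.
Qed.

Lemma S_round_sub {f g : formula T} : S_round f g ->
  forall x y, form_sem g x y -> form_sem f x y.
Proof.
move=> [len_eq round] x y /Exists_exists [Q [Q_in Qxy]].
have [k [k_lt Q_def]] := In_nth _ _ nil Q_in.
have k_lt_f : k < length f by apply/ltP; rewrite -len_eq.
have [refined kept] := round k k_lt_f.
apply/Exists_exists; exists (nth k f nil); split.
  by apply: nth_In; rewrite -len_eq.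
rewrite -Q_def in Qxy.
case: (classic (has_impl f (nth k f nil))) => [has | hasn't].
- by case: (proj1 (refined has x y) Qxy).
- by rewrite -(kept hasn't).
Qed.

Lemma S_round_strict {f g : formula T} : S_round f g ->
  forall {x y}, strict (form_sem f) x y -> strict (form_sem g) x y.
Proof.
move=> Hround x y [fxy not_fyx]; split; last first.
  by move=> gyx; apply: not_fyx; exact: S_round_sub Hround y x gyx.
case: Hround => [len_eq round].
move: fxy => /Exists_exists [P [P_in Pxy]].
have [k [k_lt P_def]] := In_nth _ _ nil P_in.
have [refined kept] := round k (introT ltP k_lt).
apply/Exists_exists; exists (nth k g nil); split.
  by apply: nth_In; rewrite len_eq.
rewrite -P_def in Pxy.
case: (classic (has_impl f (nth k f nil))) => [has | hasn't].
- apply/(refined has x y); split => // Pj Pj_in _ Pjyx.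
  by apply: not_fyx; apply/Exists_exists; exists Pj.
- by rewrite (kept hasn't).
Qed.

Lemma S_step_strict {f g : formula T} : S_step f g ->
  forall {x y}, strict (form_sem f) x y -> strict (form_sem g) x y.
Proof.
move=> [h [Hround [Hsteps _]]] x y fxy.
have [hxy not_hyx] := S_round_strict Hround fxy.
by split; rewrite -(cleanup_steps_sem Hsteps).
Qed.

Lemma opS_strict {f g : formula T} : opS f g ->
  forall {x y}, strict (form_sem f) x y -> strict (form_sem g) x y.
Proof.
case=> steps _; elim: steps => [a b /S_step_strict // | // | a b c _ IHab _ IHbc] x y.
by move=> /IHab /IHbc.
Qed.

Lemma Best_antimono (R R' : ttuple T -> ttuple T -> Prop) (r : list (ttuple T)) :
  (forall x y, R x y -> R' x y) -> forall t, Best R' r t -> Best R r t.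
Proof.
move=> RR' t [t_in not_dominated]; split => // [[t' [t'_in Rt't]]].
by apply: not_dominated; exists t'; split; last exact: RR'.
Qed.

End Refinement.

(* The inclusion holds for an arbitrary formula G. *)
Theorem mainTheorem1 (d : nat) (T : 'I_d -> taxonomy) (F : formula T)
  (X : list op) (G H : formula T) (r : list (ttuple T)) :
  wf_formula F ->
  derives F X G ->
  opS G H ->
  forall t, Best (strict (form_sem H)) r t -> Best (strict (form_sem G)) r t.
Proof.
move=> _ _ GH; apply: Best_antimono; exact: opS_strict GH.
Qed.
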